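(* Let $1<p\le2$ and $\varepsilon\in(0,3)$. For all sufficiently large $n$ (depending on $p,\varepsilon$) there exists an approximately convex set $A\subseteq\ell_p^n$ such that $$\mathcal{H}(A,\operatorname{Co}(A))\ge\log_2 n-\varepsilon\qquad\text{and}\qquad\operatorname{diam}(A)\le\frac{25}{\varepsilon}\,n^{(p-1)/p}(\log_2 n)^2 .$$
   Context: $\ell_p^n$ is $\mathbb{R}^n$ with the norm $(\sum|a_i|^p)^{1/p}$. A set $A$ is approximately convex if $d(tx+(1-t)y,A)\le1$ for all $x,y\in A$, $t\in[0,1]$, where $d(x,A)=\inf_{a\in A}\|x-a\|$. $\mathcal{H}$ is the Hausdorff distance, $\operatorname{Co}$ the convex hull, $\operatorname{diam}(A)=\sup\{\|x-y\|:x,y\in A\}$. *)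

From HB Require Import structures.
From mathcomp Require Import all_boot all_order all_algebra.
From mathcomp Require Import all_classical all_reals all_analysis.
Set Implicit Arguments. Unset Strict Implicit. Unset Printing Implicit Defensive.
Import Order.TTheory GRing.Theory Num.Theory.
Local Open Scope classical_set_scope.
Local Open Scope ring_scope.

Section Defs.
Variable R : realType.

Definition pnorm (p : R) (n : nat) (x : 'rV[R]_n) : R :=
  (\sum_(i < n) `|x ord0 i| `^ p) `^ (p^-1).

(* d(x,A) = inf_{a in A} ||x - a||, in the extended reals (+oo for empty A) *)
Definition dist_set (p : R) (n : nat) (x : 'rV[R]_n) (A : set 'rV[R]_n) : \bar R :=
  ereal_inf [set (pnorm p (x - a))%:E | a in A].

Definition approx_convex (p : R) (n : nat) (A : set 'rV[R]_n) : Prop :=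
  forall x y t, A x -> A y -> 0 <= t <= 1 ->
    (dist_set p (t *: x + (1 - t) *: y) A <= 1%:E)%E.

Definition hausdorff (p : R) (n : nat) (A B : set 'rV[R]_n) : \bar R :=
  maxe (ereal_sup [set dist_set p a B | a in A])
       (ereal_sup [set dist_set p b A | b in B]).

Definition conv_hull (n : nat) (A : set 'rV[R]_n) : set 'rV[R]_n :=
  [set x | exists (k : nat) (w : 'I_k -> R) (a : 'I_k -> 'rV[R]_n),
      (forall i, 0 <= w i) /\ \sum_(i < k) w i = 1 /\
      (forall i, A (a i)) /\ x = \sum_(i < k) w i *: a i].

Definition diam (p : R) (n : nat) (A : set 'rV[R]_n) : \bar R :=
  ereal_sup [set (pnorm p (x - y))%:E | x in A & y in A].

Definition log2 (x : R) : R := ln x / ln 2.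

End Defs.

(* Take, in R^(1+m), the set A of points (s, M x) with x a probability vector
   whose entropy, in bits, is at most the height s <= log2 m.  Entropy is
   concave up to one bit, so raising the height of a convex combination by at
   most 1 puts it back into A: A is approximately convex.  The barycenter of the
   vertices (0, M e_i) lies in Co(A), yet a point of A either has height at
   least log2 n - eps or has entropy so low that, by a Pinsker-type inequality,
   its weights are l1-far and then, by a reverse Hoelder inequality, lp-far from
   uniform; the scale M ~ n^((p-1)/p) (log n)^2 / eps makes the second distance
   also at least log2 n - eps.  Heights and weights being bounded, diam A <= 3M. *)

From HB Require Import structures.
From mathcomp Require Import all_boot all_order all_algebra.
From mathcomp Require Import all_classical all_reals all_analysis.
From mathcomp.algebra_tactics Require Import ring lra.
From mathcomp Require Import zify.
Set Implicit Arguments.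
Unset Strict Implicit.
Unset Printing Implicit Defensive.
Import Order.TTheory GRing.Theory Num.Theory.
Local Open Scope classical_set_scope.
Local Open Scope ring_scope.

Section LnBounds.
Variable R : realType.
Implicit Types c t y : R.

Lemma ln_le_subr1 y : 0 < y -> ln y <= y - 1.
Proof. by move=> y0; have := @le_ln1Dx R (y - 1); rewrite subrKC; apply; lra. Qed.

Lemma ln2_gt0 : 0 < ln (2 : R).
Proof. by rewrite ln_gt0 // ltr1n. Qed.

Lemma ln2_ge_half : 1 / 2 <= ln (2 : R).
Proof. by have := @ln_le_subr1 (1 / 2) ltac:(by []); rewrite div1r lnV ?posrE //; lra. Qed.

Lemma ln2_le1 : ln (2 : R) <= 1.
Proof. by have := @ln_le_subr1 2 ltac:(by []); lra. Qed.

Lemma mulr_ln_le c y : 0 <= c <= y -> c * ln c <= c * ln y.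
Proof.
case/andP; rewrite le_eqVlt => /predU1P[<-|c0] cy; first by rewrite !mul0r.
by rewrite ler_pM2l // ler_ln ?posrE // (lt_le_trans c0).
Qed.

Lemma xlnxM t y : 0 <= t -> 0 <= y ->
  (t * y) * ln (t * y) = t * (y * ln y) + y * (t * ln t).
Proof.
rewrite !le_eqVlt => /predU1P[<-|t0]; first by rewrite !(mulr0, mul0r, addr0, add0r).
move=> /predU1P[<-|y0]; first by rewrite !(mulr0, mul0r, addr0, add0r).
by rewrite lnM ?posrE //; ring.
Qed.

(* Tangent-line bound for [-t ln t] at [t = 1/c]; it comes from [ln (1/(c t)) <= 1/(c t) - 1]. *)
Lemma oppr_xlnx_le c t : 0 < c -> 0 <= t -> - (t * ln t) <= t * ln c + c^-1 - t.
Proof.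
move=> c0; rewrite le_eqVlt => /predU1P[<-|t0].
  by rewrite !(mul0r, oppr0, subr0, add0r, addr0) invr_ge0 ltW.
have := @ln_le_subr1 ((c * t)^-1) ltac:(by rewrite invr_gt0 mulr_gt0).
rewrite lnV ?posrE ?mulr_gt0 // lnM ?posrE // => h.
have : t * (- (ln c + ln t)) <= t * ((c * t)^-1 - 1) by rewrite ler_pM2l.
by rewrite invfM mulrBr mulr1 mulrCA mulfV ?gt_eqF // mulr1; lra.
Qed.

Lemma binary_entropy_le_ln2 t : 0 <= t <= 1 ->
  - (t * ln t) - ((1 - t) * ln (1 - t)) <= ln 2.
Proof.
case/andP=> t0 t1.
have := @oppr_xlnx_le 2 t ltac:(by []) t0.
have := @oppr_xlnx_le 2 (1 - t) ltac:(by []) ltac:(by rewrite subr_ge0).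
by lra.
Qed.

End LnBounds.

Section Entropy.
Variables (R : realType) (m : nat).
Implicit Types x y : 'I_m -> R.

Definition entropy x : R := - \sum_i x i * ln (x i).

Definition prob_vec x := (forall i, 0 <= x i) /\ \sum_i x i = 1.

Lemma prob_vec_le1 x : prob_vec x -> forall i, x i <= 1.
Proof. by case=> x0 x1 i; rewrite -x1 (bigD1 i) //= lerDl sumr_ge0. Qed.

Lemma entropy_ge0 x : prob_vec x -> 0 <= entropy x.
Proof.
move=> hx; rewrite /entropy oppr_ge0 sumr_le0 // => i _.
by rewrite mulr_ge0_le0 ?hx.1 // ln_le0 // prob_vec_le1.
Qed.

Lemma entropy_le_ln_card x : (0 < m)%N -> prob_vec x -> entropy x <= ln m%:R.
Proof.
move=> m0 [x0 x1]; have mp : 0 < (m%:R : R) by rewrite ltr0n.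
have : \sum_i - (x i * ln (x i)) <= \sum_i (x i * ln m%:R + m%:R^-1 - x i).
  by apply: ler_sum => i _; exact: oppr_xlnx_le.
have hm : m%:R^-1 *+ m = 1 :> R by rewrite -(mulr_natr (m%:R^-1) m) mulVf ?gt_eqF.
rewrite !big_split /= -mulr_suml x1 mul1r sumr_const card_ord hm.
by rewrite !sumrN x1 /entropy; lra.
Qed.

(* Entropy is concave up to an additive [ln 2]: the mixing weights [t, 1 - t]
   contribute at most their own binary entropy. *)
Lemma entropy_mix_le x y t : prob_vec x -> prob_vec y -> 0 <= t <= 1 ->
  entropy (fun i => t * x i + (1 - t) * y i) <= t * entropy x + (1 - t) * entropy y + ln 2.
Proof.
move=> [x0 x1] [y0 y1] /[dup] t01 /andP[t0 t1].
have t1' : 0 <= 1 - t by rewrite subr_ge0.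
have : \sum_i (t * (x i * ln (x i)) + x i * (t * ln t) +
     ((1 - t) * (y i * ln (y i)) + y i * ((1 - t) * ln (1 - t))))
   <= \sum_i (t * x i + (1 - t) * y i) * ln (t * x i + (1 - t) * y i).
  apply: ler_sum => i _; rewrite -xlnxM // -xlnxM // (mulrDl (t * x i)).
  by apply: lerD; apply: mulr_ln_le; rewrite mulr_ge0 //= ?lerDl ?lerDr mulr_ge0.
rewrite !big_split /= -!mulr_sumr -!mulr_suml x1 y1 !mul1r.
by have := binary_entropy_le_ln2 t01; rewrite /entropy; lra.
Qed.

(* Split [a = 1/m + (a - 1/m)] and bound [ln (m a)] by [m a - 1] on the first
   part and by [ln m] on the second. *)
Lemma mul_ln_card_le (a : R) : (0 < m)%N -> 0 <= a <= 1 ->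
  a * ln m%:R + a * ln a <= (1 + ln m%:R) * `|a - m%:R^-1|.
Proof.
move=> m0; have mp : 0 < (m%:R : R) by rewrite ltr0n.
have lm0 : 0 <= ln (m%:R : R) by rewrite ln_ge0 // ler1n.
case/andP; rewrite le_eqVlt => /predU1P[<-|a0] a1.
  by rewrite !mul0r addr0 mulr_ge0 // addr_ge0.
rewrite -mulrDr -lnM ?posrE //.
have [ma1|ma1] := lerP (m%:R * a) 1.
  apply: (@le_trans _ _ 0); last by rewrite mulr_ge0 ?addr_ge0.
  by apply: mulr_ge0_le0; [exact: ltW | exact: ln_le0].
set u := m%:R^-1; set L := ln (m%:R * a).
have um : u * m%:R = 1 by rewrite mulVf ?gt_eqF.
have au : u < a by rewrite -[X in _ < X]mul1r -um -mulrA ltr_pMr ?invr_gt0.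
have L_le : L <= m%:R * a - 1 by apply: ln_le_subr1; lra.
have L_le_ln : L <= ln m%:R by rewrite /L ler_ln ?posrE ?mulr_gt0 // ler_piMr // ltW.
have : u * L <= u * (m%:R * a - 1) by rewrite ler_wpM2l // invr_ge0 ltW.
have : (a - u) * L <= (a - u) * ln m%:R by rewrite ler_wpM2l // subr_ge0 ltW.
have -> : a * L = u * L + (a - u) * L by ring.
have -> : u * (m%:R * a - 1) = a - u by rewrite mulrBr mulrA um mul1r mulr1.
by rewrite ger0_norm; [lra | rewrite subr_ge0 ltW].
Qed.

Lemma ln_card_sub_entropy_le x : (0 < m)%N -> prob_vec x ->
  ln m%:R - entropy x <= (1 + ln m%:R) * \sum_i `|x i - m%:R^-1|.
Proof.
move=> m0 /[dup] hx [x0 x1].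
have : \sum_i (x i * ln m%:R + x i * ln (x i)) <=
       \sum_i (1 + ln m%:R) * `|x i - m%:R^-1|.
  by apply: ler_sum => i _; rewrite mul_ln_card_le // x0 prob_vec_le1.
by rewrite big_split /= -mulr_suml x1 mul1r -mulr_sumr /entropy; lra.
Qed.

Lemma l1_dist_uniform_gt x L d : (0 < m)%N -> prob_vec x ->
  ln m%:R <= L -> L - ln m%:R <= d / 2 -> entropy x < L - d ->
  d / (2 * (1 + L)) < \sum_i `|x i - m%:R^-1|.
Proof.
move=> m0 hx lmL hL hH.
have lm0 : 0 <= ln (m%:R : R) by rewrite ln_ge0 // ler1n.
have L1 : 0 < 1 + L by lra.
have V0 : 0 <= \sum_i `|x i - m%:R^-1| by rewrite sumr_ge0.
have := ln_card_sub_entropy_le m0 hx.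
have : (1 + ln m%:R) * \sum_i `|x i - m%:R^-1| <= (1 + L) * \sum_i `|x i - m%:R^-1|.
  by rewrite ler_wpM2r // lerD2l.
rewrite ltr_pdivrMr ?mulr_gt0 //; lra.
Qed.

End Entropy.
Arguments entropy {R m}.
Arguments prob_vec {R m}.

Section PowR.
Variables (R : realType) (p : R).
Hypothesis p1 : 1 < p.

Let p_gt0 : 0 < p. Proof. exact: lt_trans ltr01 p1. Qed.

Lemma powR_invl (x r : R) : 0 <= x -> (x^-1) `^ r = (x `^ r)^-1.
Proof. by move=> x0; rewrite -powR_inv1 // -powRrM mulN1r powRN. Qed.

Lemma powRK (x : R) : 0 <= x -> (x `^ p) `^ p^-1 = x.
Proof. by move=> x0; rewrite -powRrM mulfV ?gt_eqF // powRr1. Qed.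

Lemma powR_le_id (a : R) : 0 <= a <= 1 -> a `^ p <= a.
Proof.
case/andP; rewrite le_eqVlt => /predU1P[<-|a0] a1; first by rewrite powR0 ?gt_eqF.
by apply: ge1r_powR; rewrite ?a0 ?a1 // ltW.
Qed.

Lemma sum_powR_ge0 n (v : 'rV[R]_n) : 0 <= \sum_i `|v ord0 i| `^ p.
Proof. by apply: sumr_ge0 => i _; exact: powR_ge0. Qed.

Lemma pnorm_ge n (v : 'rV[R]_n) K : 0 <= K ->
  K `^ p <= \sum_i `|v ord0 i| `^ p -> K <= pnorm p v.
Proof.
move=> K0 h; rewrite -(powRK K0).
apply: ge0_ler_powR; rewrite ?nnegrE ?powR_ge0 ?sum_powR_ge0 //.
by rewrite invr_ge0 ltW.
Qed.

Lemma pnorm_le n (v : 'rV[R]_n) K : 0 <= K ->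
  \sum_i `|v ord0 i| `^ p <= K `^ p -> pnorm p v <= K.
Proof.
move=> K0 h; rewrite -(powRK K0).
apply: ge0_ler_powR; rewrite ?nnegrE ?powR_ge0 ?sum_powR_ge0 //.
by rewrite invr_ge0 ltW.
Qed.

(* Splitting at [v = tau]: below [tau] use [v < tau], above it use
   [v = v^p v^(1-p) <= v^p tau^(1-p)]. *)
Lemma le_add_powR (tau v : R) : 0 < tau -> 0 <= v ->
  v <= tau + v `^ p * tau `^ (1 - p).
Proof.
move=> tau0 v0; have [vt|tv] := ltrP v tau.
  by rewrite (le_trans (ltW vt)) // lerDl mulr_ge0 // powR_ge0.
have tauK : tau `^ (p - 1) * tau `^ (1 - p) = 1.
  by rewrite -(opprB p 1) powRN mulfV // gt_eqF // powR_gt0.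
have : tau `^ (p - 1) <= v `^ (p - 1).
  by apply: ge0_ler_powR; rewrite ?subr_ge0 ?nnegrE ?(ltW p1) ?(ltW tau0).
move=> /(ler_wpM2r (powR_ge0 tau (1 - p))) /(ler_wpM2l v0).
rewrite tauK mulr1 mulrA mulr_powRB1 // => /le_trans; apply.
by rewrite lerDr ltW.
Qed.

Lemma sum_powR_ge m (w : 'I_m -> R) a n : (forall i, 0 <= w i) ->
  0 < a -> 0 < n -> m%:R <= n -> 2 * a < \sum_i w i ->
  a * (a / n) `^ (p - 1) <= \sum_i w i `^ p.
Proof.
move=> w0 a0 n0 mn wa; set tau := a / n.
have tau0 : 0 < tau by rewrite divr_gt0.
have : \sum_i w i <= \sum_i (tau + w i `^ p * tau `^ (1 - p)).
  by apply: ler_sum => i _; exact: le_add_powR.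
rewrite big_split /= sumr_const card_ord -mulr_suml -mulr_natl => hsum.
have mtau : m%:R * tau <= a.
  by rewrite /tau mulrCA ler_piMr ?(ltW a0) // ler_pdivrMr // mul1r.
have tauK : tau `^ (1 - p) * tau `^ (p - 1) = 1.
  by rewrite -(opprB p 1) powRN mulVf // gt_eqF // powR_gt0.
have : a * tau `^ (p - 1) < (\sum_i w i `^ p) * tau `^ (1 - p) * tau `^ (p - 1).
  by rewrite ltr_pM2r ?powR_gt0 //; lra.
by rewrite -mulrA tauK mulr1 => /ltW.
Qed.

(* The identity behind the choice of the scale [M = K n^((p-1)/p) / a] below. *)
Lemma powR_scale_cancel (K a n : R) : 0 <= K -> 0 < a -> 0 < n ->
  (K * n `^ ((p - 1) / p) / a) `^ p * (a * (a / n) `^ (p - 1)) = K `^ p.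
Proof.
move=> K0 a0 n0; have [a0' n0'] := (ltW a0, ltW n0).
have e0 : (K * n `^ ((p - 1) / p) / a) `^ p = K `^ p * n `^ (p - 1) * (a `^ p)^-1.
  rewrite powRM ?mulr_ge0 ?powR_ge0 ?invr_ge0 // powRM ?powR_ge0 //.
  by rewrite -powRrM mulfVK ?gt_eqF // powR_invl.
have e1 : (a / n) `^ (p - 1) = a `^ (p - 1) * (n `^ (p - 1))^-1.
  by rewrite powRM ?invr_ge0 // powR_invl.
rewrite e0 e1 (mulrA a) mulr_powRB1 //.
have : a `^ p != 0 by rewrite gt_eqF // powR_gt0.
have : n `^ (p - 1) != 0 by rewrite gt_eqF // powR_gt0.
by move: (a `^ p) (n `^ (p - 1)) => A B hB hA; field; rewrite hA hB.
Qed.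

End PowR.

Definition holder_scale (R : realType) (p eps : R) (n : nat) : R :=
  log2 n%:R * n%:R `^ ((p - 1) / p) / (eps * ln 2 / (4 * (1 + ln n%:R))).

Section EntropyEpigraph.
Variables (R : realType) (p : R) (m : nat) (M : R).
Hypotheses (p1 : 1 < p) (m0 : (0 < m)%N) (M0 : 0 < M).

Let p_gt0 : 0 < p. Proof. exact: lt_trans ltr01 p1. Qed.

Definition weights (v : 'rV[R]_m.+1) (i : 'I_m) : R := v ord0 (lift ord0 i) / M.

(* Coordinate [0] is a height [s], the other [m] coordinates are [M x] for a
   probability vector [x]: the set is [{(s, M x) | H(x) / ln 2 <= s <= log2 m}]. *)
Definition entropy_epigraph : set 'rV[R]_m.+1 :=
  [set v | prob_vec (weights v) /\
           entropy (weights v) <= ln 2 * v ord0 ord0 <= ln m%:R].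

Lemma lift0_eq0F (i : 'I_m) : (lift ord0 i == ord0) = false.
Proof. by rewrite eq_sym (negbTE (neq_lift _ _)). Qed.

Lemma weightsK v i : M * weights v i = v ord0 (lift ord0 i).
Proof. by rewrite /weights mulrC divfK ?gt_eqF. Qed.

Lemma epigraph_height v : entropy_epigraph v -> 0 <= v ord0 ord0 <= log2 m%:R.
Proof.
move=> [sv /andP[h1 h2]]; have l2 := @ln2_gt0 R.
apply/andP; split; last by rewrite ler_pdivlMr // mulrC.
by rewrite -(pmulr_rge0 _ l2) (le_trans (entropy_ge0 sv)).
Qed.

Lemma weights_mix v w t :
  weights (t *: v + (1 - t) *: w) = (fun i => t * weights v i + (1 - t) * weights w i).
Proof. by apply: funext => i; rewrite /weights !mxE mulrDl !mulrA. Qed.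

Lemma epigraph_raise c : prob_vec (weights c) ->
  entropy (weights c) <= ln 2 * (c ord0 ord0 + 1) -> ln 2 * c ord0 ord0 <= ln m%:R ->
  exists2 c', entropy_epigraph c' & pnorm p (c - c') <= 1.
Proof.
move=> sc hub ule; have l2 := @ln2_gt0 R.
set u := c ord0 ord0 in hub ule; set h := entropy (weights c) in hub.
set s := Num.max u (h / ln 2).
have d01 : 0 <= s - u <= 1.
  rewrite subr_ge0 le_max lexx /= lerBlDl ge_max lerDl ler01 /=.
  by rewrite ler_pdivrMr // mulrC.
exists (c + (s - u) *: delta_mx ord0 ord0).
  have e00 : (c + (s - u) *: delta_mx ord0 ord0) ord0 ord0 = s by rewrite !mxE !eqxx mulr1 subrKC.
  have ew : weights (c + (s - u) *: delta_mx ord0 ord0) = weights c.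
    by apply: funext => i; rewrite /weights !mxE lift0_eq0F andbF mulr0 addr0.
  rewrite /entropy_epigraph /= ew e00; split => //; apply/andP; split.
    by rewrite -ler_pdivrMl // mulrC le_max lexx orbT.
  rewrite mulrC -ler_pdivlMr // ge_max ler_pdivlMr // mulrC ule /=.
  by rewrite ler_pM2r ?invr_gt0 // entropy_le_ln_card.
apply: (pnorm_le p1) => //; rewrite powR1 big_ord_recl big1 ?addr0.
  rewrite !mxE !eqxx mulr1 opprD addNKr normrN ger0_norm; last by case/andP: d01.
  by apply: le_trans (powR_le_id p1 d01) _; case/andP: d01.
by move=> i _; rewrite !mxE lift0_eq0F andbF mulr0 addr0 subrr normr0 powR0 ?gt_eqF.
Qed.

Lemma epigraph_approx_convex : approx_convex p entropy_epigraph.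
Proof.
move=> v w t [sv /andP[hv1 hv2]] [sw /andP[hw1 hw2]] /[dup] t01 /andP[t0 t1].
have t1' : 0 <= 1 - t by rewrite subr_ge0.
set c := t *: v + (1 - t) *: w.
have sc : prob_vec (weights c).
  rewrite /c weights_mix; split => [i|].
    by rewrite addr_ge0 // mulr_ge0 // (sv.1, sw.1).
  by rewrite big_split /= -!mulr_sumr sv.2 sw.2 !mulr1 subrKC.
have u_def : c ord0 ord0 = t * v ord0 ord0 + (1 - t) * w ord0 ord0 by rewrite !mxE.
have hz := entropy_mix_le sv sw t01; rewrite -weights_mix -/c in hz.
have [c' Ac' dc'] : exists2 c', entropy_epigraph c' & pnorm p (c - c') <= 1.
  apply: epigraph_raise => //; rewrite u_def.
    have : t * entropy (weights v) <= t * (ln 2 * v ord0 ord0) by rewrite ler_wpM2l.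
    have : (1 - t) * entropy (weights w) <= (1 - t) * (ln 2 * w ord0 ord0) by rewrite ler_wpM2l.
    by lra.
  have : t * (ln 2 * v ord0 ord0) <= t * ln m%:R by rewrite ler_wpM2l.
  have : (1 - t) * (ln 2 * w ord0 ord0) <= (1 - t) * ln m%:R by rewrite ler_wpM2l.
  by lra.
rewrite /dist_set; apply: le_trans (ereal_inf_lbound _) _; first by exists c'.
by rewrite lee_fin.
Qed.

Lemma epigraph_pnorm_sub_le v w : entropy_epigraph v -> entropy_epigraph w ->
  log2 m%:R <= M -> pnorm p (v - w) <= 3 * M.
Proof.
move=> Av Aw hM.
have /andP[v0 v1] := epigraph_height Av; have /andP[w0 w1] := epigraph_height Aw.
have [[sv0 sv1] _] := Av; have [[sw0 sw1] _] := Aw.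
apply: (pnorm_le p1); first by rewrite mulr_ge0 // ltW.
rewrite big_ord_recl.
have height_le : `|(v - w) ord0 ord0| `^ p <= M `^ p.
  apply: ge0_ler_powR; rewrite ?nnegrE ?normr_ge0 ?(ltW p_gt0) ?(ltW M0) //.
  by rewrite !mxE ler_norml; apply/andP; split; lra.
have weights_le : \sum_(i < m) `|(v - w) ord0 (lift ord0 i)| `^ p <= M `^ p * 2.
  rewrite -[2]/(1 + 1) -{1}sv1 -sw1 -big_split mulr_sumr /=.
  apply: ler_sum => i _; rewrite !mxE -!weightsK -mulrBr normrM (gtr0_norm M0).
  rewrite powRM ?normr_ge0 ?(ltW M0) // ler_wpM2l ?powR_ge0 //.
  have := prob_vec_le1 Av.1 i; have := prob_vec_le1 Aw.1 i.
  have := sv0 i; have := sw0 i => *.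
  apply: le_trans (powR_le_id p1 _) _.
    by rewrite normr_ge0 /= ler_norml; apply/andP; split; lra.
  by rewrite (le_trans (ler_normB _ _)) // !ger0_norm.
have three_le : 3 <= 3 `^ p :> R by apply: le1r_powR; rewrite ?ler1n // ltW.
have := powR_ge0 M p.
by rewrite powRM ?(ltW M0) //; nra.
Qed.

Definition vertex (i : 'I_m) : 'rV[R]_m.+1 := M *: delta_mx ord0 (lift ord0 i).

Lemma vertex_entry i j : vertex i ord0 j = M * (j == lift ord0 i)%:R.
Proof. by rewrite !mxE eqxx. Qed.

Lemma epigraph_vertex i : entropy_epigraph (vertex i).
Proof.
have wi : weights (vertex i) = fun j => (j == i)%:R.
  apply: funext => j; rewrite /weights vertex_entry (inj_eq (@lift_inj _ ord0)).
  by rewrite mulrC mulKf // gt_eqF.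
rewrite /entropy_epigraph /= wi vertex_entry (eq_sym ord0) lift0_eq0F !mulr0; split.
  split => [j|]; first by rewrite ler0n.
  by rewrite (bigD1 i) // eqxx big1 /= ?addr0 // => j /negbTE ->.
rewrite /entropy big1 ?oppr0 ?lexx ?ln_ge0 ?ler1n // => j _.
by case: eqP => _; rewrite ?ln1 ?mulr0 ?mul0r.
Qed.

Definition barycenter : 'rV[R]_m.+1 := \sum_(i < m) m%:R^-1 *: vertex i.

Lemma barycenter_in_hull : conv_hull entropy_epigraph barycenter.
Proof.
exists m, (fun _ => m%:R^-1), vertex; split; first by move=> i; rewrite invr_ge0 ler0n.
split; last by split => //; exact: epigraph_vertex.
by rewrite sumr_const card_ord -(mulr_natr (m%:R^-1) m) mulVf // pnatr_eq0 -lt0n.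
Qed.

Lemma barycenter_entry j :
  barycenter ord0 j = \sum_(i < m) m%:R^-1 * (M * (j == lift ord0 i)%:R).
Proof. by rewrite summxE; apply: eq_bigr => i _; rewrite mxE vertex_entry. Qed.

Lemma barycenter_height : barycenter ord0 ord0 = 0.
Proof. by rewrite barycenter_entry big1 // => i _; rewrite eq_sym lift0_eq0F !mulr0. Qed.

Lemma barycenter_weight k : barycenter ord0 (lift ord0 k) = M * m%:R^-1.
Proof.
rewrite barycenter_entry (bigD1 k) // eqxx big1 /= ?mulr1 ?addr0 1?mulrC //.
by move=> i /negbTE ik; rewrite (inj_eq (@lift_inj _ ord0)) eq_sym ik !mulr0.
Qed.

Lemma barycenter_dist_ge eps a : entropy_epigraph a -> 0 < eps ->
  M = holder_scale p eps m.+1 -> ln m.+1%:R - ln m%:R <= eps * ln 2 / 2 ->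
  log2 m.+1%:R - eps <= pnorm p (barycenter - a).
Proof.
move=> Aa e0; rewrite /holder_scale => hM hln; have [sa /andP[h1 _]] := Aa.
have /andP[s0 _] := epigraph_height Aa.
have l2 := @ln2_gt0 R.
have np : 0 < (m.+1%:R : R) by rewrite ltr0n.
have Ln0 : 0 < ln (m.+1%:R : R) by rewrite ln_gt0 // ltr1n ltnS.
have lmn : ln (m%:R : R) <= ln m.+1%:R by rewrite ler_ln ?posrE ?ltr0n // ler_nat.
set K := log2 m.+1%:R in hM *; set a0 := eps * ln 2 / (4 * (1 + ln m.+1%:R)) in hM *.
have K0 : 0 <= K by rewrite /K /log2 divr_ge0 // ltW.
have a0p : 0 < a0 by rewrite /a0 divr_gt0 ?mulr_gt0 // addr_gt0.
have [hs|hs] := lerP (K - eps) (a ord0 ord0).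
  apply: le_trans hs _; apply: (pnorm_ge p1) => //.
  rewrite big_ord_recl !mxE barycenter_height sub0r normrN ger0_norm // lerDl.
  by apply: sumr_ge0 => i _; exact: powR_ge0.
have hH : entropy (weights a) < ln m.+1%:R - eps * ln 2.
  have : ln 2 * a ord0 ord0 < ln 2 * (K - eps) by rewrite ltr_pM2l.
  by rewrite mulrBr /K /log2 mulrCA divff ?gt_eqF // mulr1; lra.
have := l1_dist_uniform_gt m0 sa lmn hln hH.
have -> : eps * ln 2 / (2 * (1 + ln m.+1%:R)) = 2 * a0.
  by rewrite /a0; field; rewrite gt_eqF // addr_gt0.
move=> /(sum_powR_ge p1 (fun i => normr_ge0 _) a0p np).
rewrite ler_nat => /(_ (leqnSn m)) hS.
apply: le_trans (_ : K <= _); first by lra.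
apply: (pnorm_ge p1) => //; rewrite -(powR_scale_cancel p1 K0 a0p np) -hM.
rewrite big_ord_recl; apply: le_trans (_ : M `^ p * \sum_i `|weights a i - m%:R^-1| `^ p <= _).
  by rewrite ler_wpM2l // powR_ge0.
have -> : M `^ p * \sum_i `|weights a i - m%:R^-1| `^ p =
          \sum_i `|(barycenter - a) ord0 (lift ord0 i)| `^ p.
  rewrite mulr_sumr; apply: eq_bigr => i _.
  rewrite !mxE barycenter_weight -weightsK -mulrBr normrM.
  by rewrite gtr0_norm // powRM ?(ltW M0) // distrC.
by have := powR_ge0 `|(barycenter - a) ord0 ord0| p; lra.
Qed.

End EntropyEpigraph.

Section HolderScale.
Variables (R : realType) (p eps : R).
Hypotheses (p1 : 1 < p) (eps_gt0 : 0 < eps) (eps_lt3 : eps < 3).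

Lemma ln_ge1 (n : nat) : (4 <= n)%N -> 1 <= ln (n%:R : R).
Proof.
move=> n4; have : ln (4 : R) <= ln n%:R by rewrite ler_ln ?posrE ?ler_nat ?ltr0n ?(leq_trans _ n4).
by rewrite (_ : 4 = 2 * 2) ?lnM ?posrE -?natrM //; have := @ln2_ge_half R; lra.
Qed.

Lemma ln_succ_sub_le (m : nat) : 4 / eps < m%:R ->
  ln (m.+1%:R : R) - ln m%:R <= eps * ln 2 / 2.
Proof.
move=> meps; have m0 : 0 < (m%:R : R) by apply: lt_trans meps; rewrite divr_gt0.
apply: (@le_trans _ _ m%:R^-1).
  have := @ln_le_subr1 R (m.+1%:R / m%:R) ltac:(by rewrite divr_gt0).
  rewrite ln_div ?posrE // => /le_trans; apply.
  by rewrite -natr1 mulrDl divff ?gt_eqF // mul1r addrC addKr.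
have : 4 < m%:R * eps by rewrite -ltr_pdivrMr.
have : eps / 4 * m%:R <= eps * ln 2 / 2 * m%:R.
  rewrite ler_wpM2r ?(ltW m0) // -mulrA ler_wpM2l ?(ltW eps_gt0) //.
  by have := @ln2_ge_half R; lra.
rewrite -[m%:R^-1]mul1r ler_pdivrMr //; lra.
Qed.

Section LargeDimension.
Variable n : nat.
Hypothesis n4 : (4 <= n)%N.

Lemma pow_subr1_ge1 : 1 <= (n%:R : R) `^ ((p - 1) / p).
Proof.
apply: (@le_trans _ _ (n%:R `^ 0)); first by rewrite powRr0.
rewrite ler_powR ?ler1n ?(leq_trans _ n4) //.
have p0 : 0 < p := lt_trans ltr01 p1.
by rewrite divr_ge0 ?subr_ge0 ?(ltW p1) ?(ltW p0).
Qed.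

Lemma holder_scale_gt0 : 0 < holder_scale p eps n.
Proof.
have [l2 L1] := (ln2_gt0 R, ln_ge1 n4).
have n0 : (0 < n)%N by exact: leq_trans n4.
rewrite /holder_scale /log2 !divr_gt0 ?mulr_gt0 ?powR_gt0 ?addr_gt0 ?invr_gt0 ?ltr0n //.
all: lra.
Qed.

Lemma log2_le_holder_scale : log2 n%:R <= holder_scale p eps n.
Proof.
have [l2 L1] := (ln2_gt0 R, ln_ge1 n4).
have K0 : 0 < log2 (n%:R : R) by rewrite /log2 divr_gt0 //; lra.
rewrite /holder_scale -mulrA ler_peMr ?(ltW K0) // ler_pdivlMr; last first.
  by rewrite !divr_gt0 ?mulr_gt0 //; lra.
rewrite mul1r (le_trans _ pow_subr1_ge1) // ler_pdivrMr; last by rewrite mulr_gt0 //; lra.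
have : eps * ln 2 <= eps * 1 by rewrite ler_wpM2l ?ln2_le1 // ltW.
by have := eps_lt3; lra.
Qed.

(* Both sides equal [c * n^((p-1)/p) / (eps ln 2 ^ 2)], with [c = 12 L (1 + L)]
   on the left and [c = 25 L^2] on the right, [L = ln n]. *)
Lemma three_holder_scale_le :
  3 * holder_scale p eps n <= 25 / eps * n%:R `^ ((p - 1) / p) * log2 n%:R ^+ 2.
Proof.
have [l2 L1] := (ln2_gt0 R, ln_ge1 n4).
set L := ln (n%:R : R) in L1 *; set Q := (n%:R : R) `^ ((p - 1) / p).
have Q0 : 0 <= Q / (eps * ln 2 ^+ 2) by rewrite divr_ge0 ?powR_ge0 ?mulr_ge0 ?ltW.
have -> : 3 * holder_scale p eps n = 12 * L * (1 + L) * (Q / (eps * ln 2 ^+ 2)).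
  by rewrite /holder_scale /log2 -/L -/Q; field; rewrite !gt_eqF //; lra.
have -> : 25 / eps * Q * log2 n%:R ^+ 2 = 25 * L ^+ 2 * (Q / (eps * ln 2 ^+ 2)).
  by rewrite /log2 -/L; field; rewrite !gt_eqF.
by rewrite ler_wpM2r //; nra.
Qed.

End LargeDimension.
End HolderScale.

Theorem corollary4p2 (R : realType) (p eps : R) :
  1 < p <= 2 -> 0 < eps < 3 ->
  exists N : nat, forall n : nat, (N <= n)%N ->
    exists A : set 'rV[R]_n,
      A !=set0 /\ approx_convex p A /\
      (((log2 n%:R - eps)%:E <= hausdorff p A (conv_hull A))%E /\
       (diam p A <= (25 / eps * n%:R `^ ((p - 1) / p) * log2 n%:R ^+ 2)%:E)%E).
Proof.
move=> /andP[p1 _] /andP[e0 e3].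
exists (Num.truncn (4 / eps) + 5)%N => -[|m] hm; first by move: hm; lia.
have m4 : (4 <= m.+1)%N by move: hm; lia.
have m0 : (0 < m)%N by move: hm; lia.
have meps : 4 / eps < m%:R.
  apply: lt_le_trans (real_truncnS_gt _) _; first by rewrite ger0_real ?divr_ge0 ?ltW.
  by rewrite ler_nat; move: hm; lia.
set M := holder_scale p eps m.+1.
have M0 : 0 < M := holder_scale_gt0 p e0 m4.
exists (entropy_epigraph (m := m) M); split.
  by exists (vertex M (Ordinal m0)); exact: epigraph_vertex.
split; first exact: epigraph_approx_convex.
split.
  rewrite /hausdorff le_max; apply/orP; right.
  apply: le_trans (ereal_sup_ubound _); last by exists (barycenter m M); [exact: barycenter_in_hull|].
  apply: le_ereal_inf_tmp => _ [a Aa <-]; rewrite lee_fin.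
  exact: barycenter_dist_ge (ln_succ_sub_le e0 meps).
apply: ge_ereal_sup => _ [v Av [w Aw <-]]; rewrite lee_fin.
apply: le_trans (three_holder_scale_le p e0 m4).
apply: epigraph_pnorm_sub_le => //; apply: le_trans (log2_le_holder_scale p1 e0 e3 m4).
by rewrite ler_pM2r ?invr_gt0 ?ln2_gt0 // ler_ln ?posrE ?ltr0n // ler_nat.
Qed.
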